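(* There is an absolute constant $C$ such that for every odd positive integer $d$, $$\sup_{t\in(0,d^{-1/2}]}\frac{|r_d(t)|}{t}\le\frac{C}{\sqrt d}.$$
   Context: The Hermite polynomials $(H_k)_{k\ge0}$ are the orthonormal polynomials for $\mathcal{N}(0,1)$ with $\deg H_k=k$ and positive leading coefficient (the probabilist's Hermite polynomials divided by $\sqrt{k!}$). The remainder $r_d(x)$ is defined by $$H_d(x)=\exp\!\left(\frac{x^2}{4}\right)\left(\frac{2}{\pi d}\right)^{1/4}\left(\sin\!\left[\frac{1-d}{2}\pi+\sqrt d\,x\right]+r_d(x)\right).$$ *)

From Stdlib Require Import Reals Arith.
Open Scope R_scope.

(* Probabilist's Hermite polynomials He_k, via the standard three-term
   recurrence He_0 = 1, He_1 = x, He_{k+2} = x He_{k+1} - (k+1) He_k. *)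
Fixpoint HeP (k : nat) (x : R) : R * R :=
  (* returns (He_k x, He_{k+1} x) *)
  match k with
  | O => (1, x)
  | S k' => let (a, b) := HeP k' x in (b, x * b - INR k * a)
  end.

Definition He (k : nat) (x : R) : R := fst (HeP k x).

(* Orthonormal Hermite polynomials for N(0,1): H_k = He_k / sqrt(k!). *)
Definition H (k : nat) (x : R) : R := He k x / sqrt (INR (Factorial.fact k)).

(* The remainder r_d, solved from
   H_d(x) = exp(x^2/4) (2/(pi d))^(1/4) (sin[(1-d)/2 pi + sqrt d x] + r_d(x)). *)
Definition r (d : nat) (x : R) : R :=
  H d x / (exp (x ^ 2 / 4) * Rpower (2 / (PI * INR d)) (1 / 4))
  - sin ((1 - INR d) / 2 * PI + sqrt (INR d) * x).

(* Write d = 2m + 1 and q = sqrt d.  The Hermite function He_d(x) exp(-x^2/4) solves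
   u'' = (x^2/4 - 1/2 - d) u, so r_d solves the oscillator equation
   r'' = -q^2 r + (x^2/4 - 1/2) (r + sin(phase + q x)), whose forcing is O(q x + |r|)
   on [0, 1/q].  Since d is odd, r_d(0) = 0, and the Wallis inequalities for the
   integrals of sin^n show that the normalising constant makes r_d'(0) = O(1/q).
   A Gronwall estimate for the energy r'^2 + q^2 r^2 keeps |r_d'| <= 2/q on [0, 1/q],
   and the mean value theorem gives |r_d(t)| <= 2 t / q. *)

From Stdlib Require Import Reals Factorial Lra Lia Psatz.
From Coquelicot Require Import Coquelicot.
Open Scope R_scope.

(** * Perturbed harmonic oscillator *)

Lemma exp_le_of_le x y : x <= y -> exp x <= exp y.
Proof. intros [H|H]; [left; apply exp_increasing, H|subst; lra]. Qed.

Lemma le_of_derive_nonpos (f f' : R -> R) a b :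
  a <= b -> (forall x, a <= x <= b -> is_derive f x (f' x)) ->
  (forall x, a <= x <= b -> f' x <= 0) -> f b <= f a.
Proof.
  intros [Hab|Hab] Hder Hneg; [|subst; lra].
  destruct (MVT_cor2 f f' a b Hab) as [c [Hc Hcab]].
  - intros c Hc. apply is_derive_Reals, Hder, Hc.
  - assert (f' c <= 0) by (apply Hneg; lra). nra.
Qed.

Lemma gronwall_quadratic (a b t : R) (E E' : R -> R) :
  0 <= a -> 0 <= b -> (forall x, is_derive E x (E' x)) ->
  (forall x, 0 <= x <= t -> E' x <= a * E x + b * x ^ 2) ->
  forall x, 0 <= x <= t -> E x <= exp (a * x) * (E 0 + b * x ^ 3 / 3).
Proof.
  intros Ha Hb HE Hgrowth x Hx.
  assert (Hdecr : E x * exp (- (a * x)) - b * x ^ 3 / 3 <= E 0 * exp (- (a * 0)) - b * 0 ^ 3 / 3).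
  { apply (le_of_derive_nonpos (fun y => E y * exp (- (a * y)) - b * y ^ 3 / 3)
      (fun y => (E' y - a * E y) * exp (- (a * y)) - b * y ^ 2)); [lra| |].
    - intros y _. auto_derive; [eexists; apply HE|].
      rewrite (is_derive_unique (fun z : R => E z) _ _ (HE y)). field.
    - intros y Hy. pose proof (Hgrowth y ltac:(lra)).
      assert (exp (- (a * y)) <= 1) by (rewrite <- exp_0; apply exp_le_of_le; nra).
      pose proof (exp_pos (- (a * y))). assert (0 <= b * y ^ 2) by (apply Rmult_le_pos; nra). nra. }
  rewrite Rmult_0_r, Ropp_0, exp_0 in Hdecr.
  replace (E x) with (exp (a * x) * (E x * exp (- (a * x))))
    by (rewrite Rmult_comm, Rmult_assoc, <- exp_plus, Rplus_opp_l, exp_0; ring).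
  apply Rmult_le_compat_l; [left; apply exp_pos|]. lra.
Qed.

Lemma abs_sub_le_of_derive_bound (y y' : R -> R) (M t : R) :
  0 < t -> (forall x, is_derive y x (y' x)) -> (forall x, 0 <= x <= t -> Rabs (y' x) <= M) ->
  Rabs (y t - y 0) <= M * t.
Proof.
  intros Ht Hder Hbound.
  destruct (MVT_cor2 y y' 0 t Ht) as [c [Hc Hct]]; [intros c _; apply is_derive_Reals, Hder|].
  rewrite Hc, Rminus_0_r, Rabs_mult, (Rabs_right t) by lra.
  apply Rmult_le_compat_r; [lra|]. apply Hbound. lra.
Qed.

Lemma energy_growth q x a b g :
  1 <= q -> 0 <= x -> 2 * Rabs g <= q * x + Rabs b ->
  2 * a * g <= q * (a ^ 2 + q ^ 2 * b ^ 2) + q / 2 * x ^ 2.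
Proof.
  intros Hq Hx Hg.
  assert (H1 : 2 * a * g <= Rabs a * (q * x + Rabs b)).
  { pose proof (Rle_abs (2 * a * g)) as Habs. rewrite !Rabs_mult, (Rabs_right 2) in Habs by lra.
    pose proof (Rabs_pos a). nra. }
  assert (H2 : Rabs a * x <= (a ^ 2 + x ^ 2) / 2)
    by (rewrite <- (pow2_abs a); pose proof (pow2_ge_0 (Rabs a - x)); nra).
  assert (H3 : Rabs a * Rabs b <= (a ^ 2 + b ^ 2) / 2)
    by (rewrite <- (pow2_abs a), <- (pow2_abs b); pose proof (pow2_ge_0 (Rabs a - Rabs b)); nra).
  assert (H4 : b ^ 2 <= q ^ 3 * b ^ 2) by (assert (1 <= q ^ 3) by (apply pow_R1_Rle; lra); nra).
  assert (H5 : q * (Rabs a * x) <= q * ((a ^ 2 + x ^ 2) / 2)) by (apply Rmult_le_compat_l; lra).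
  assert (H6 : a ^ 2 <= q * a ^ 2) by nra.
  nra.
Qed.

Section PerturbedOscillator.

Variables (q t : R) (y y' f : R -> R).
Hypotheses (Hq : 1 <= q) (Ht : 0 < t) (Hqt : q * t <= 1).
Hypotheses (Hy : forall x, is_derive y x (y' x)) (Hy' : forall x, is_derive y' x (- q ^ 2 * y x + f x)).
Hypothesis Hf : forall x, 0 <= x <= t -> 2 * Rabs (f x) <= q * x + Rabs (y x).
Hypotheses (Hy0 : y 0 = 0) (Hy'0 : q ^ 2 * y' 0 ^ 2 <= 1).

Let E x := y' x ^ 2 + q ^ 2 * y x ^ 2.

Lemma oscillator_energy_le x : 0 <= x <= t -> E x <= exp (q * x) * (E 0 + q / 2 * x ^ 3 / 3).
Proof.
  apply (gronwall_quadratic q (q / 2) t E (fun x => 2 * y' x * f x)); [lra|lra| |].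
  - intro z. unfold E.
    auto_derive; [exact (conj (ex_intro _ _ (Hy' z)) (conj (ex_intro _ _ (Hy z)) I))|].
    rewrite (is_derive_unique (fun u : R => y' u) _ _ (Hy' z)),
      (is_derive_unique (fun u : R => y u) _ _ (Hy z)).
    ring.
  - intros z Hz. apply energy_growth; [lra|lra|apply Hf, Hz].
Qed.

Lemma oscillator_slope_bound x : 0 <= x <= t -> Rabs (y' x) <= 2 / q.
Proof.
  intros Hx. pose proof (oscillator_energy_le x Hx) as HEx. unfold E in HEx. rewrite Hy0 in HEx.
  assert (Hqx : 0 <= q * x <= 1) by nra.
  assert (Hexp : exp (q * x) <= 3)
    by (apply (Rle_trans _ (exp 1)); [apply exp_le_of_le; lra|apply exp_le_3]).
  assert (Hcube : q ^ 2 * (q * x ^ 3) <= 1).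
  { replace (q ^ 2 * (q * x ^ 3)) with ((q * x) ^ 3) by ring.
    rewrite <- (pow1 3). apply pow_incr. lra. }
  assert (Hx3 : 0 <= q * x ^ 3) by (apply Rmult_le_pos; [lra|apply pow_le; lra]).
  assert (H1 : y' x ^ 2 <= 3 * (y' 0 ^ 2 + q * x ^ 3 / 6)).
  { apply (Rle_trans _ (exp (q * x) * (y' 0 ^ 2 + q * x ^ 3 / 6))).
    - assert (0 <= q ^ 2 * y x ^ 2) by nra.
      replace (q * x ^ 3 / 6) with (q ^ 2 * 0 ^ 2 + q / 2 * x ^ 3 / 3) by field. nra.
    - apply Rmult_le_compat_r; [nra|exact Hexp]. }
  assert (H2 : q ^ 2 * y' x ^ 2 <= q ^ 2 * (3 * (y' 0 ^ 2 + q * x ^ 3 / 6)))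
    by (apply Rmult_le_compat_l; [nra|exact H1]).
  assert (H3 : (Rabs (y' x) * q) ^ 2 <= 2 ^ 2) by (rewrite Rpow_mult_distr, pow2_abs; nra).
  apply (Rmult_le_reg_r q); [lra|]. replace (2 / q * q) with 2 by (field; lra).
  pose proof (Rabs_pos (y' x)). nra.
Qed.

Lemma perturbed_oscillator_bound : Rabs (y t) <= 2 / q * t.
Proof.
  replace (y t) with (y t - y 0) by (rewrite Hy0; ring).
  apply (abs_sub_le_of_derive_bound y y'); [exact Ht|exact Hy|exact oscillator_slope_bound].
Qed.

End PerturbedOscillator.

(** * Hermite polynomials and Hermite functions *)

Lemma He_S k x : He (S k) x = x * He k x - INR k * He (pred k) x.
Proof.
  destruct k as [|k]; [cbn; ring|].
  unfold He; cbn [HeP pred]. destruct (HeP k x) as [a b]; cbn. ring.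
Qed.

Lemma is_derive_He k x : is_derive (He k) x (INR k * He (pred k) x).
Proof.
  enough (IH : forall k, (forall x, is_derive (He k) x (INR k * He (pred k) x)) /\
                         (forall x, is_derive (He (S k)) x (INR (S k) * He k x)))
    by apply IH.
  clear k x. induction k as [|k [IHk IHSk]]; split; intro x; try exact (IHSk x).
  - apply (is_derive_ext (fun _ => 1)); [reflexivity|]. auto_derive; auto. cbn; ring.
  - apply (is_derive_ext (fun y => y)); [reflexivity|]. auto_derive; auto. cbn; ring.
  - apply (is_derive_ext (fun y => y * He (S k) y - INR (S k) * He k y)).
    { intro y. rewrite (He_S (S k)). reflexivity. }
    auto_derive.
    + repeat split; eexists; [apply IHSk|apply IHk].
    + rewrite (is_derive_unique (fun y : R => He (S k) y) _ _ (IHSk x)),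
        (is_derive_unique (fun y : R => He k y) _ _ (IHk x)).
      rewrite (He_S k). change (match k with O => 1 | S _ => INR k + 1 end) with (INR (S k)).
      rewrite !S_INR. cbn [pred]. ring.
Qed.

Lemma He_hermite_equation k x :
  INR k * (INR (pred k) * He (pred (pred k)) x) = x * (INR k * He (pred k) x) - INR k * He k x.
Proof. destruct k as [|k]; [cbn; ring|]. cbn [pred]. rewrite (He_S k). ring. Qed.

Definition hermite_fun (k : nat) (x : R) : R := He k x * exp (- (x ^ 2 / 4)).

Definition hermite_fun' (k : nat) (x : R) : R :=
  (INR k * He (pred k) x - x / 2 * He k x) * exp (- (x ^ 2 / 4)).

Lemma is_derive_hermite_fun k x : is_derive (hermite_fun k) x (hermite_fun' k x).
Proof.
  unfold hermite_fun, hermite_fun'. auto_derive.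
  - repeat split. exact (ex_intro _ _ (is_derive_He k x)).
  - rewrite (is_derive_unique (fun y : R => He k y) _ _ (is_derive_He k x)).
    replace (x * (x * 1) * / 4) with (x ^ 2 / 4) by (unfold Rdiv; ring). field.
Qed.

Lemma is_derive_hermite_fun' k x :
  is_derive (hermite_fun' k) x ((x ^ 2 / 4 - 1 / 2 - INR k) * hermite_fun k x).
Proof.
  unfold hermite_fun, hermite_fun'. auto_derive.
  - repeat split; eexists; apply is_derive_He.
  - rewrite (is_derive_unique (fun y : R => He (pred k) y) _ _ (is_derive_He (pred k) x)),
      (is_derive_unique (fun y : R => He k y) _ _ (is_derive_He k x)).
    replace (x * (x * 1) * / 4) with (x ^ 2 / 4) by (unfold Rdiv; ring).
    rewrite Rmult_1_l, He_hermite_equation. field.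
Qed.

Fixpoint odd_dfact (m : nat) : R :=
  match m with O => 1 | S m' => INR (2 * m' + 1) * odd_dfact m' end.

Lemma odd_dfact_pos m : 0 < odd_dfact m.
Proof.
  induction m as [|m IH]; cbn [odd_dfact]; [lra|].
  apply Rmult_lt_0_compat; [apply lt_0_INR; lia|exact IH].
Qed.

Lemma He_even_0 m : He (2 * m) 0 = (-1) ^ m * odd_dfact m.
Proof.
  induction m as [|m IH]; [cbn; ring|].
  replace (2 * S m)%nat with (S (S (2 * m))) by lia.
  rewrite He_S. cbn [pred]. rewrite IH. replace (S (2 * m)) with (2 * m + 1)%nat by lia.
  cbn [odd_dfact pow]. ring.
Qed.

Lemma He_odd_0 m : He (2 * m + 1) 0 = 0.
Proof.
  induction m as [|m IH]; [cbn; ring|].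
  replace (2 * S m + 1)%nat with (S (S (2 * m + 1))) by lia.
  rewrite He_S. cbn [pred]. rewrite IH. ring.
Qed.

(** * Wallis integrals *)

Definition wallis (n : nat) : R := RInt (fun x => sin x ^ n) 0 (PI / 2).

Lemma continuous_sin_pow n x : continuous (fun y => sin y ^ n) x.
Proof. apply (@ex_derive_continuous R_AbsRing R_NormedModule). auto_derive. auto. Qed.

Lemma ex_RInt_sin_pow n : ex_RInt (fun x => sin x ^ n) 0 (PI / 2).
Proof. apply (@ex_RInt_continuous R_CompleteNormedModule). intros x _. apply continuous_sin_pow. Qed.

Lemma wallis_0 : wallis 0 = PI / 2.
Proof. unfold wallis. cbn [pow]. rewrite RInt_const. cbn. unfold mult; cbn. ring. Qed.

Lemma wallis_1 : wallis 1 = 1.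
Proof.
  unfold wallis. apply is_RInt_unique.
  replace 1 with (minus (- cos (PI / 2)) (- cos 0))
    by (rewrite cos_PI2, cos_0; unfold minus, plus, opp; cbn; ring).
  apply (is_RInt_ext sin); [intros x _; symmetry; apply pow_1|].
  apply (@is_RInt_derive R_CompleteNormedModule (fun x => - cos x)).
  - intros x _. auto_derive; auto. ring.
  - intros x _. apply continuity_pt_filterlim, continuity_sin.
Qed.

(* Integration by parts against [sin^(n+1) cos], using [cos^2 = 1 - sin^2]. *)
Lemma wallis_rec n : INR (n + 2) * wallis (n + 2) = INR (n + 1) * wallis n.
Proof.
  set (f := fun x => INR (n + 2) * sin x ^ (n + 2) - INR (n + 1) * sin x ^ n).
  set (F := fun x => - (sin x ^ (n + 1) * cos x)).
  assert (Hparts : is_RInt f 0 (PI / 2) (minus (F (PI / 2)) (F 0))).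
  { apply (@is_RInt_derive R_CompleteNormedModule).
    - intros x _. unfold F. auto_derive; auto. unfold f.
      replace (n + 2)%nat with (S (S n)) by lia. replace (n + 1)%nat with (S n) by lia.
      rewrite !S_INR. cbn [pow pred]. pose proof (sin2_cos2 x) as Hsc. unfold Rsqr in Hsc.
      apply Rminus_diag_uniq.
      transitivity (- (INR n + 1) * sin x ^ n * (sin x * sin x + cos x * cos x - 1)); [ring|].
      rewrite Hsc. ring.
    - intros x _. apply (@ex_derive_continuous R_AbsRing R_NormedModule). unfold f. auto_derive. auto. }
  assert (HF : minus (F (PI / 2)) (F 0) = 0).
  { unfold F. rewrite cos_PI2, sin_0, pow_i by lia. unfold minus, plus, opp; cbn. ring. }
  assert (Hlin : is_RInt f 0 (PI / 2) (INR (n + 2) * wallis (n + 2) - INR (n + 1) * wallis n)).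
  { unfold wallis. apply (@is_RInt_minus R_NormedModule);
      apply (@is_RInt_scal R_NormedModule), (@RInt_correct R_CompleteNormedModule), ex_RInt_sin_pow. }
  pose proof (is_RInt_unique _ _ _ _ Hparts). pose proof (is_RInt_unique _ _ _ _ Hlin). lra.
Qed.

Lemma wallis_succ_le n : wallis (S n) <= wallis n.
Proof.
  unfold wallis. pose proof PI_RGT_0.
  apply RInt_le; [lra|apply ex_RInt_sin_pow|apply ex_RInt_sin_pow|].
  intros x Hx. cbn [pow].
  assert (0 <= sin x) by (apply sin_ge_0; lra).
  assert (0 <= sin x ^ n) by (apply pow_le; lra).
  pose proof (SIN_bound x). nra.
Qed.

Lemma wallis_pos n : 0 < wallis n.
Proof.
  unfold wallis. pose proof PI_RGT_0.
  apply RInt_gt_0; [lra| |intros x _; apply continuous_sin_pow].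
  intros x Hx. apply pow_lt, sin_gt_0; lra.
Qed.

Lemma wallis_mul_succ n : INR (n + 1) * wallis (n + 1) * wallis n = PI / 2.
Proof.
  induction n as [|n IH].
  - cbn [Nat.add]. rewrite wallis_0, wallis_1. cbn. ring.
  - replace (S n + 1)%nat with (n + 2)%nat by lia. replace (S n) with (n + 1)%nat by lia.
    rewrite wallis_rec, <- IH. ring.
Qed.

Lemma wallis_even_sq_bounds m :
  PI / (2 * INR (2 * m + 1)) <= wallis (2 * m) ^ 2 <= PI * (INR (2 * m + 1) + 1) / (2 * INR (2 * m + 1) ^ 2).
Proof.
  set (d := INR (2 * m + 1)).
  assert (Hd : 0 < d) by (apply lt_0_INR; lia).
  assert (Hd1 : INR (2 * m + 2) = d + 1) by (unfold d; rewrite <- S_INR; f_equal; lia).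
  pose proof (wallis_mul_succ (2 * m)) as Hprod. fold d in Hprod.
  pose proof (wallis_pos (2 * m)) as Hpos.
  pose proof (wallis_succ_le (2 * m)) as Hle1. replace (S (2 * m)) with (2 * m + 1)%nat in Hle1 by lia.
  pose proof (wallis_succ_le (2 * m + 1)) as Hle2.
  replace (S (2 * m + 1)) with (2 * m + 2)%nat in Hle2 by lia.
  pose proof (wallis_rec (2 * m)) as Hrec. rewrite Hd1 in Hrec. fold d in Hrec.
  set (w0 := wallis (2 * m)) in *. set (w1 := wallis (2 * m + 1)) in *.
  assert (Hw1 : d * w0 <= (d + 1) * w1).
  { rewrite <- Hrec. apply Rmult_le_compat_l; lra. }
  split.
  - apply (Rmult_le_reg_l d); [exact Hd|].
    replace (d * (PI / (2 * d))) with (PI / 2) by (field; lra). rewrite <- Hprod.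
    assert (d * w0 * w1 <= d * w0 * w0) by (apply Rmult_le_compat_l; nra). nra.
  - apply (Rmult_le_reg_l (2 * d ^ 2)); [nra|].
    replace (2 * d ^ 2 * (PI * (d + 1) / (2 * d ^ 2))) with ((d + 1) * (2 * (PI / 2))) by (field; lra).
    rewrite <- Hprod.
    assert (d * w0 * w0 <= (d + 1) * w1 * w0) by (apply Rmult_le_compat_r; lra). nra.
Qed.

Lemma fact_mul_wallis_even m :
  INR (fact (2 * m + 1)) * wallis (2 * m) = PI / 2 * INR (2 * m + 1) * odd_dfact m ^ 2.
Proof.
  induction m as [|m IH]; [cbn -[wallis]; rewrite wallis_0; ring|].
  replace (2 * S m + 1)%nat with (S (S (2 * m + 1))) by lia.
  replace (2 * S m)%nat with (2 * m + 2)%nat by lia.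
  cbn [fact odd_dfact]. rewrite !mult_INR.
  replace (INR (S (S (2 * m + 1)))) with (INR (2 * m + 1) + 2) by (rewrite !S_INR; ring).
  replace (INR (S (2 * m + 1))) with (INR (2 * m + 2)) by (f_equal; lia).
  transitivity ((INR (2 * m + 1) + 2) * INR (fact (2 * m + 1)) * (INR (2 * m + 2) * wallis (2 * m + 2)));
    [ring|].
  rewrite wallis_rec.
  transitivity ((INR (2 * m + 1) + 2) * INR (2 * m + 1) * (INR (fact (2 * m + 1)) * wallis (2 * m)));
    [ring|].
  rewrite IH. ring.
Qed.

(** * The normalising constant *)

Lemma Rpower_quarter_pow4 x : 0 < x -> Rpower x (1 / 4) ^ 4 = x.
Proof.
  intro Hx. rewrite <- Rpower_pow by apply exp_pos.
  rewrite Rpower_mult. replace (1 / 4 * INR 4) with 1 by (cbn; field). apply Rpower_1, Hx.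
Qed.

Definition hermite_scale (d : nat) : R :=
  / (sqrt (INR (fact d)) * Rpower (2 / (PI * INR d)) (1 / 4)).

Lemma hermite_scale_pow4 m :
  (hermite_scale (2 * m + 1) * INR (2 * m + 1) * odd_dfact m) ^ 4
  = 2 * INR (2 * m + 1) ^ 3 / PI * wallis (2 * m) ^ 2.
Proof.
  pose proof (fact_mul_wallis_even m) as Hfw.
  set (d := INR (2 * m + 1)) in *. set (F := INR (fact (2 * m + 1))) in *.
  assert (Hd : 0 < d) by (apply lt_0_INR; lia).
  assert (HF : 0 < F) by apply INR_fact_lt_0.
  pose proof PI_RGT_0 as Hpi.
  assert (Hsqrt : sqrt F ^ 2 = F) by (rewrite <- Rsqr_pow2; apply Rsqr_sqrt; lra).
  assert (HP : Rpower (2 / (PI * d)) (1 / 4) ^ 4 = 2 / (PI * d))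
    by (apply Rpower_quarter_pow4; apply Rdiv_lt_0_compat; nra).
  assert (HP0 : 0 < Rpower (2 / (PI * d)) (1 / 4)) by apply exp_pos.
  assert (Hs0 : 0 < sqrt F) by (apply sqrt_lt_R0; lra).
  unfold hermite_scale. fold d F.
  set (P := Rpower (2 / (PI * d)) (1 / 4)) in *.
  replace ((/ (sqrt F * P) * d * odd_dfact m) ^ 4)
    with (d ^ 4 * (odd_dfact m ^ 2) ^ 2 / ((sqrt F ^ 2) ^ 2 * P ^ 4)) by (field; lra).
  rewrite Hsqrt, HP.
  assert (Hw2 : odd_dfact m ^ 2 = 2 * F * wallis (2 * m) / (PI * d)).
  { apply (Rmult_eq_reg_l (PI / 2 * d)); [rewrite <- Hfw; field; lra|nra]. }
  rewrite Hw2. field. lra.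
Qed.

Lemma sub_sq_le_of_pow4_bounds q y :
  0 < q -> 0 <= y -> q ^ 4 <= y ^ 4 <= q ^ 4 + q ^ 2 -> q ^ 2 * (y - q) ^ 2 <= 1.
Proof.
  intros Hq Hy [Hlo Hhi].
  assert (Hqy : q <= y).
  { destruct (Rle_or_lt q y) as [H|H]; [exact H|].
    assert (y ^ 2 < q ^ 2) by nra. nra. }
  assert (Hfac : y ^ 4 - q ^ 4 = (y - q) * ((y + q) * (y ^ 2 + q ^ 2))) by ring.
  assert (Hgrow : (y - q) * (4 * q ^ 3) <= (y - q) * ((y + q) * (y ^ 2 + q ^ 2))).
  { apply Rmult_le_compat_l; [lra|]. replace (4 * q ^ 3) with (2 * q * (2 * q ^ 2)) by ring.
    apply Rmult_le_compat; nra. }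
  assert (Hlin : q * (y - q) <= 1 / 4).
  { apply (Rmult_le_reg_l (4 * q ^ 2)); [nra|]. nra. }
  assert (0 <= q * (y - q)) by nra. nra.
Qed.

(* [hermite_scale d * d * odd_dfact m] is the slope at 0 of the Hermite part of [r d]. *)
Lemma hermite_scale_odd_bound m :
  sqrt (INR (2 * m + 1)) ^ 2
  * (hermite_scale (2 * m + 1) * INR (2 * m + 1) * odd_dfact m - sqrt (INR (2 * m + 1))) ^ 2 <= 1.
Proof.
  pose proof (hermite_scale_pow4 m) as Hy4. pose proof (wallis_even_sq_bounds m) as [Wlo Whi].
  set (d := INR (2 * m + 1)) in *.
  set (y := hermite_scale (2 * m + 1) * d * odd_dfact m) in *.
  assert (Hd : 0 < d) by (apply lt_0_INR; lia).
  pose proof PI_RGT_0 as Hpi.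
  assert (Hq2 : sqrt d ^ 2 = d) by (rewrite <- Rsqr_pow2; apply Rsqr_sqrt; lra).
  assert (Hy : 0 <= y).
  { unfold y, hermite_scale. pose proof (odd_dfact_pos m).
    apply Rmult_le_pos; [|lra]. apply Rmult_le_pos; [|lra].
    left. apply Rinv_0_lt_compat, Rmult_lt_0_compat; [apply sqrt_lt_R0, INR_fact_lt_0|apply exp_pos]. }
  apply sub_sq_le_of_pow4_bounds; [apply sqrt_lt_R0; lra|exact Hy|].
  replace (sqrt d ^ 4) with ((sqrt d ^ 2) ^ 2) by ring. rewrite Hq2, Hy4.
  assert (Hc : 0 <= 2 * d ^ 3 / PI)
    by (apply Rlt_le, Rdiv_lt_0_compat; [apply Rmult_lt_0_compat, pow_lt|]; lra).
  split.
  - replace (d ^ 2) with (2 * d ^ 3 / PI * (PI / (2 * d))) by (field; lra).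
    apply Rmult_le_compat_l; [exact Hc|exact Wlo].
  - replace (d ^ 2 + d) with (2 * d ^ 3 / PI * (PI * (d + 1) / (2 * d ^ 2))) by (field; lra).
    apply Rmult_le_compat_l; [exact Hc|exact Whi].
Qed.

(** * The remainder r_d *)

Definition hermite_phase (d : nat) : R := (1 - INR d) / 2 * PI.

Lemma r_eq d x :
  r d x = hermite_scale d * hermite_fun d x - sin (hermite_phase d + sqrt (INR d) * x).
Proof.
  unfold r, H, hermite_scale, hermite_fun, hermite_phase. rewrite exp_Ropp.
  pose proof (exp_pos (x ^ 2 / 4)). pose proof (exp_pos (1 / 4 * ln (2 / (PI * INR d)))).
  pose proof (sqrt_lt_R0 _ (INR_fact_lt_0 d)).
  unfold Rpower. field. lra.
Qed.

Definition r' (d : nat) (x : R) : R :=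
  hermite_scale d * hermite_fun' d x - sqrt (INR d) * cos (hermite_phase d + sqrt (INR d) * x).

Lemma is_derive_r d x : is_derive (r d) x (r' d x).
Proof.
  apply (is_derive_ext
    (fun y => hermite_scale d * hermite_fun d y - sin (hermite_phase d + sqrt (INR d) * y))).
  { intro y. symmetry. apply r_eq. }
  auto_derive; [exact (ex_intro _ _ (is_derive_hermite_fun d x))|].
  rewrite (is_derive_unique (fun y : R => hermite_fun d y) _ _ (is_derive_hermite_fun d x)).
  unfold r'. ring.
Qed.

Lemma is_derive_r' d x :
  is_derive (r' d) x
    (- sqrt (INR d) ^ 2 * r d x + (x ^ 2 / 4 - 1 / 2) * (r d x + sin (hermite_phase d + sqrt (INR d) * x))).
Proof.
  unfold r'. auto_derive; [exact (ex_intro _ _ (is_derive_hermite_fun' d x))|].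
  rewrite (is_derive_unique (fun y : R => hermite_fun' d y) _ _ (is_derive_hermite_fun' d x)).
  rewrite r_eq. pose proof (sqrt_sqrt (INR d) (pos_INR d)) as Hq.
  set (q := sqrt (INR d)) in *. rewrite <- Hq. ring.
Qed.

Lemma sin_sub_INR_PI m a : sin (a - INR m * PI) = (-1) ^ m * sin a.
Proof.
  induction m as [|m IH]; [cbn; rewrite Rmult_0_l, Rminus_0_r; ring|].
  rewrite S_INR. replace (a - (INR m + 1) * PI) with (a - INR m * PI - PI) by ring.
  rewrite sin_minus, sin_PI, cos_PI, IH. cbn [pow]. ring.
Qed.

Lemma cos_sub_INR_PI m a : cos (a - INR m * PI) = (-1) ^ m * cos a.
Proof.
  induction m as [|m IH]; [cbn; rewrite Rmult_0_l, Rminus_0_r; ring|].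
  rewrite S_INR. replace (a - (INR m + 1) * PI) with (a - INR m * PI - PI) by ring.
  rewrite cos_minus, sin_PI, cos_PI, IH. cbn [pow]. ring.
Qed.

Lemma hermite_phase_odd m a : hermite_phase (2 * m + 1) + a = a - INR m * PI.
Proof. unfold hermite_phase. rewrite plus_INR, mult_INR. cbn. field. Qed.

Lemma abs_sin_odd_phase_le m a : 0 <= a <= 1 -> Rabs (sin (hermite_phase (2 * m + 1) + a)) <= a.
Proof.
  intros Ha. rewrite hermite_phase_odd, sin_sub_INR_PI, Rabs_mult, pow_1_abs, Rmult_1_l.
  pose proof PI2_1. pose proof PI2_Rlt_PI.
  rewrite Rabs_right by (apply Rle_ge, sin_ge_0; lra).
  destruct (Req_dec a 0) as [->|Ha0]; [rewrite sin_0; lra|].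
  left. apply sin_lt_x. lra.
Qed.

Lemma r_odd_0 m : r (2 * m + 1) 0 = 0.
Proof.
  rewrite r_eq. unfold hermite_fun. rewrite He_odd_0, Rmult_0_r, hermite_phase_odd, sin_sub_INR_PI, sin_0.
  ring.
Qed.

Lemma r'_odd_0 m : sqrt (INR (2 * m + 1)) ^ 2 * r' (2 * m + 1) 0 ^ 2 <= 1.
Proof.
  assert (Hr' : r' (2 * m + 1) 0
    = (-1) ^ m * (hermite_scale (2 * m + 1) * INR (2 * m + 1) * odd_dfact m - sqrt (INR (2 * m + 1)))).
  { unfold r', hermite_fun'. replace (pred (2 * m + 1)) with (2 * m)%nat by lia.
    rewrite He_even_0, Rmult_0_r, hermite_phase_odd, cos_sub_INR_PI, cos_0.
    replace (0 ^ 2 / 4) with 0 by (cbn; field). rewrite Ropp_0, exp_0. unfold Rdiv. ring. }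
  rewrite Hr', Rpow_mult_distr, <- pow_mult, (Nat.mul_comm m 2), pow_1_even, Rmult_1_l.
  apply hermite_scale_odd_bound.
Qed.

Lemma one_le_sqrt_INR n : (0 < n)%nat -> 1 <= sqrt (INR n).
Proof. intro Hn. rewrite <- sqrt_1. apply sqrt_le_1_alt, (le_INR 1). exact Hn. Qed.

Lemma odd_perturbation_bound m x y :
  0 <= x -> sqrt (INR (2 * m + 1)) * x <= 1 ->
  2 * Rabs ((x ^ 2 / 4 - 1 / 2) * (y + sin (hermite_phase (2 * m + 1) + sqrt (INR (2 * m + 1)) * x)))
  <= sqrt (INR (2 * m + 1)) * x + Rabs y.
Proof.
  intros Hx Hqx.
  pose proof (one_le_sqrt_INR (2 * m + 1) ltac:(lia)) as Hq.
  assert (Hx1 : x <= 1) by nra.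
  assert (Hcoef : Rabs (x ^ 2 / 4 - 1 / 2) <= 1 / 2) by (apply Rabs_le; nra).
  pose proof (abs_sin_odd_phase_le m (sqrt (INR (2 * m + 1)) * x) ltac:(nra)) as Hsin.
  pose proof (Rabs_triang y (sin (hermite_phase (2 * m + 1) + sqrt (INR (2 * m + 1)) * x))).
  rewrite Rabs_mult. pose proof (Rabs_pos (x ^ 2 / 4 - 1 / 2)).
  pose proof (Rabs_pos (y + sin (hermite_phase (2 * m + 1) + sqrt (INR (2 * m + 1)) * x))). nra.
Qed.

Theorem corollaryA9 :
  exists C : R, forall d : nat, (0 < d)%nat -> Nat.odd d = true ->
    forall t : R, 0 < t -> t <= / sqrt (INR d) ->
      Rabs (r d t) / t <= C / sqrt (INR d).
Proof.
  exists 2. intros d _ Hodd t Ht Htd.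
  apply Nat.odd_spec in Hodd as [m ->].
  pose proof (one_le_sqrt_INR (2 * m + 1) ltac:(lia)) as Hq.
  assert (Hqt : sqrt (INR (2 * m + 1)) * t <= 1).
  { apply (Rmult_le_compat_l (sqrt (INR (2 * m + 1)))) in Htd; [|lra].
    rewrite Rinv_r in Htd; lra. }
  assert (Hr : Rabs (r (2 * m + 1) t) <= 2 / sqrt (INR (2 * m + 1)) * t).
  { apply (perturbed_oscillator_bound _ _ _ (r' (2 * m + 1))
      (fun x => (x ^ 2 / 4 - 1 / 2) * (r (2 * m + 1) x
                 + sin (hermite_phase (2 * m + 1) + sqrt (INR (2 * m + 1)) * x))));
      [exact Hq|exact Ht|exact Hqt|apply is_derive_r|apply is_derive_r'| |apply r_odd_0|apply r'_odd_0].
    intros x Hx. apply odd_perturbation_bound; nra. }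
  apply (Rmult_le_reg_r t); [exact Ht|]. unfold Rdiv. rewrite Rmult_assoc, Rinv_l by lra. lra.
Qed.
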